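(* If $d=7q+\beta$ with integers $q\ge 1$ and $0\le\beta\le 6$, then \[ \gamma(T_d)\le 3.5q^2+(\beta+4.5)q+\beta-1 . \]
   Context: Let $\alpha_1=(1,0)$ and $\alpha_2=(-\tfrac12,\tfrac{\sqrt3}{2})$. The triangular lattice $T_\infty$ is the infinite graph with vertex set $\{a\alpha_1+b\alpha_2 : a,b\in\mathbb Z\}$, two vertices being adjacent iff their Euclidean distance is $1$. For an integer $d\ge 0$, the triangular matchstick graph $T_d$ is the subgraph of $T_\infty$ induced by the vertices $a\alpha_1+b\alpha_2$ with $0\le b\le a\le d$. $\gamma(G)$ denotes the domination number of $G$: the minimum size of a set $D\subseteq V(G)$ such that every vertex of $G$ is in $D$ or adjacent to a vertex of $D$. *)

From HB Require Import structures.
From mathcomp Require Import all_boot all_order all_algebra.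
Set Implicit Arguments. Unset Strict Implicit. Unset Printing Implicit Defensive.
Import Order.TTheory GRing.Theory Num.Theory.

(* The point a*alpha1 + b*alpha2 of the triangular lattice is encoded by (a,b).
   Its squared Euclidean norm is |a alpha1 + b alpha2|^2 = a^2 - a b + b^2. *)
Definition tri_sqnorm (a b : int) : int := (a * a - a * b + b * b)%R.

Definition tri_adj (p q : int * int) : bool :=
  tri_sqnorm (p.1 - q.1)%R (p.2 - q.2)%R == 1%R.

Definition Tpt (d : nat) := ('I_d.+1 * 'I_d.+1)%type.

Definition Tverts (d : nat) : {set Tpt d} := [set p : Tpt d | p.2 <= p.1].

Definition Tadj (d : nat) (p q : Tpt d) : bool :=
  tri_adj (Posz (nat_of_ord p.1), Posz (nat_of_ord p.2)) (Posz (nat_of_ord q.1), Posz (nat_of_ord q.2)).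

Definition dominating (d : nat) (D : {set Tpt d}) : bool :=
  (D \subset Tverts d) &&
  [forall v in Tverts d, (v \in D) || [exists u in D, Tadj u v]].

(* Domination number of T_d : minimum size of a dominating set
   (Tverts d itself is dominating, so the default #|Tverts d| is never below the min). *)
Definition gammaT (d : nat) : nat :=
  \big[minn/#|Tverts d|]_(D : {set Tpt d} | dominating D) #|D|.

(* A dominating set of T_d is described by a pattern in the barycentric coordinates
   (x, y, z) = (b, d - a, a - b) of its vertices.  Away from the corners the pattern is
   the perfect code 3x + z = 0 (mod 7) of the triangular lattice (the seven points of a
   closed neighbourhood have distinct values of 3x + z mod 7), patched along the sides
   and at the corners by tables depending on beta = d mod 7.  The pattern is 7-periodic
   in each coordinate beyond 6, so domination at d carries over to d + 7 once d is large,
   and the number of selected vertices has vanishing third difference with step 7 in d: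
   along d = 7q + beta it is quadratic in q.  Both facts thus reduce to a finite
   computation; for q = 1 and beta in {0, 1, 2, 4} explicit small dominating sets are
   used instead. *)

From mathcomp Require Import all_boot all_order all_algebra zify ring lra.
Set Implicit Arguments.
Unset Strict Implicit.
Unset Printing Implicit Defensive.
Import Order.TTheory GRing.Theory Num.Theory.

Notation bary_pattern := (nat -> nat -> nat -> bool).

Lemma gammaT_le_card d (D : {set Tpt d}) : dominating D -> gammaT d <= #|D|.
Proof. by move=> hD; rewrite /gammaT -minEnat; exact: (bigmin_le_cond (T := nat) _ _ hD). Qed.

Definition bary_set d (Q : bary_pattern) : {set Tpt d} :=
  [set p : Tpt d | (p.2 <= p.1) && Q p.2 (d - p.1) (p.1 - p.2)].

(* The six neighbours of a vertex move one unit between two barycentric coordinates. *)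
Definition dominated_at (Q : bary_pattern) x y z : bool :=
  [|| Q x y z,
      (0 < x) && (Q x.-1 y.+1 z || Q x.-1 y z.+1),
      (0 < y) && (Q x.+1 y.-1 z || Q x y.-1 z.+1) |
      (0 < z) && (Q x.+1 y z.-1 || Q x y.+1 z.-1)].

Definition dominates (Q : bary_pattern) d : bool :=
  all (fun x => all (fun z => dominated_at Q x (d - x - z) z) (iota 0 (d - x).+1))
      (iota 0 d.+1).

Lemma dominatesP (Q : bary_pattern) d :
  reflect (forall x z, x + z <= d -> dominated_at Q x (d - x - z) z) (dominates Q d).
Proof.
apply: (iffP allP) => [h x z hxz | h x].
  have /allP hx := h x ltac:(rewrite mem_iota; lia).
  by apply: hx; rewrite mem_iota; lia.
rewrite mem_iota => hx; apply/allP => z; rewrite mem_iota => hz; apply: h; lia.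
Qed.

Definition tri_units : seq (int * int) :=
  [:: (1, 0); (0, 1); (1, 1); (-1, 0); (0, -1); (-1, -1)]%R.

Lemma tri_adj_tri_units (p q : int * int) :
  (p.1 - q.1, p.2 - q.2)%R \in tri_units -> tri_adj p q.
Proof.
rewrite /tri_adj /tri_sqnorm; move: (p.1 - q.1)%R (p.2 - q.2)%R => u w.
by rewrite !inE => /or4P[/eqP[->->]|/eqP[->->]|/eqP[->->]|/or3P[/eqP[->->]|/eqP[->->]|/eqP[->->]]].
Qed.

Lemma bary_set_adj (Q : bary_pattern) d (v : Tpt d) x y z (u w : int) :
  Q x y z -> x + y + z = d -> (u, w) \in tri_units ->
  Posz (x + z) = (Posz v.1 + u)%R -> Posz x = (Posz v.2 + w)%R ->
  [exists p in bary_set d Q, Tadj p v].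
Proof.
move=> hQ hd huw ha hb; apply/exists_inP.
have hxz : x + z < d.+1 by lia.
have hx : x < d.+1 by lia.
exists (inord (x + z), inord x); rewrite /= ?inE /Tadj /= !inordK //.
  by rewrite leq_addr (_ : d - (x + z) = y) ?addKn ?hQ //; lia.
by apply: tri_adj_tri_units; rewrite /= ha hb (addrC (Posz v.1)) (addrC (Posz v.2)) !addrK.
Qed.

Lemma dominating_bary_set (Q : bary_pattern) d :
  dominates Q d -> dominating (bary_set d Q).
Proof.
move=> /dominatesP hQ; apply/andP; split.
  by apply/subsetP => p; rewrite !inE => /andP[].
apply/forall_inP => -[[a ha] [b hbd]]; rewrite inE /= => hba.
have := hQ b (a - b) ltac:(lia); rewrite (_ : d - b - (a - b) = d - a); last lia.
case/or4P=> [h | /andP[hx /orP[] h] | /andP[hy /orP[] h] | /andP[hz /orP[] h]].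
- by rewrite inE /= hba h.
- by apply/orP; right; apply: (@bary_set_adj Q d _ _ _ _ (-1) (-1) h) => //=; lia.
- by apply/orP; right; apply: (@bary_set_adj Q d _ _ _ _ 0 (-1) h) => //=; lia.
- by apply/orP; right; apply: (@bary_set_adj Q d _ _ _ _ 1 1 h) => //=; lia.
- by apply/orP; right; apply: (@bary_set_adj Q d _ _ _ _ 1 0 h) => //=; lia.
- by apply/orP; right; apply: (@bary_set_adj Q d _ _ _ _ 0 1 h) => //=; lia.
- by apply/orP; right; apply: (@bary_set_adj Q d _ _ _ _ (-1) 0 h) => //=; lia.
Qed.

Definition diag_sum (g : nat -> nat -> nat) s := sumn [seq g (s - t) t | t <- iota 0 s.+1].

Definition pattern_count (Q : bary_pattern) d :=
  diag_sum (fun s y => diag_sum (fun x z => Q x y z) s) d.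

Lemma diag_sumE g s : diag_sum g s = \sum_(0 <= t < s.+1) g (s - t) t.
Proof. by rewrite /diag_sum sumnE big_map /index_iota subn0. Qed.

Lemma card_bary_set Q d : #|bary_set d Q| = pattern_count Q d.
Proof.
rewrite -sum1dep_card big_mkcond /=.
rewrite -(pair_bigA _ (fun (a b : 'I_d.+1) => if (b <= a) && Q b (d - a) (a - b) then 1 else 0)) /=.
transitivity (\sum_(0 <= a < d.+1) \sum_(0 <= b < a.+1) (Q b (d - a) (a - b) : nat)).
  rewrite big_mkord; apply: eq_big => // a _.
  rewrite big_mkord (big_ord_widen d.+1 (fun b => (Q b (d - a) (a - b) : nat))) //.
  by rewrite [RHS]big_mkcond; apply: eq_big => // b _; rewrite ltnS; case: (b <= a).
rewrite /pattern_count diag_sumE big_nat_rev; apply: eq_big_nat => y /andP[_ hy].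
rewrite diag_sumE add0n subSS big_nat_rev; apply: eq_big_nat => z /andP[_ hz].
by rewrite add0n subSS; congr Q; lia.
Qed.

Lemma gammaT_le_pattern_count Q d : dominates Q d -> gammaT d <= pattern_count Q d.
Proof. by move=> hQ; rewrite -card_bary_set; apply/gammaT_le_card/dominating_bary_set. Qed.

Definition periodic_pattern (p m : nat) (Q : bary_pattern) :=
  [/\ forall x y z, m <= x -> Q (x + p) y z = Q x y z,
      forall x y z, m <= y -> Q x (y + p) z = Q x y z &
      forall x y z, m <= z -> Q x y (z + p) = Q x y z].

Section PeriodicPattern.
Variables (p m : nat) (Q : bary_pattern).
Hypothesis perQ : periodic_pattern p m Q.

Lemma dominated_at_shiftx x y z :
  m < x -> dominated_at Q (x + p) y z = dominated_at Q x y z.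
Proof.
case: perQ => Qx _ _; case: x => // x hx.
by rewrite /dominated_at -!addSn /= !Qx //; lia.
Qed.

Lemma dominated_at_shifty x y z :
  m < y -> dominated_at Q x (y + p) z = dominated_at Q x y z.
Proof.
case: perQ => _ Qy _; case: y => // y hy.
by rewrite /dominated_at -!addSn /= !Qy //; lia.
Qed.

Lemma dominated_at_shiftz x y z :
  m < z -> dominated_at Q x y (z + p) = dominated_at Q x y z.
Proof.
case: perQ => _ _ Qz; case: z => // z hz.
by rewrite /dominated_at -!addSn /= !Qz //; lia.
Qed.

Lemma dominates_shift d : 3 * (m + p) < d + p -> dominates Q d -> dominates Q (d + p).
Proof.
move=> hd /dominatesP hQ; apply/dominatesP => x z hxz.
case: (ltnP (m + p) x) => [hx | hx].
  rewrite -(subnK (_ : p <= x)); last lia.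
  rewrite dominated_at_shiftx; last lia.
  rewrite (_ : d + p - (x - p + p) - z = d - (x - p) - z); last lia.
  apply: hQ; lia.
case: (ltnP (m + p) z) => [hz | hz].
  rewrite -(subnK (_ : p <= z)); last lia.
  rewrite dominated_at_shiftz; last lia.
  rewrite (_ : d + p - x - (z - p + p) = d - x - (z - p)); last lia.
  apply: hQ; lia.
rewrite (_ : d + p - x - z = (d - x - z) + p); last lia.
rewrite dominated_at_shifty; last lia.
apply: hQ; lia.
Qed.

End PeriodicPattern.

Lemma diag_sum_shift p R (g : nat -> nat -> nat) s :
  (forall u t, R <= t -> g u (t + p) = g u t) -> R <= s.+1 ->
  diag_sum g (s + p) + \sum_(0 <= t < R) g (s - t) t =
  diag_sum g s + \sum_(0 <= t < p) g (s + p - t) t + \sum_(0 <= t < R) g (s - t) (t + p).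
Proof.
move=> gper hR; rewrite !diag_sumE.
rewrite (big_cat_nat (n := p) (leq0n _) (_ : p <= (s + p).+1)) /=; last lia.
rewrite (big_addn 0 _ p) (_ : (s + p).+1 - p = s.+1); last lia.
rewrite !(big_cat_nat (n := R) (leq0n _) hR) /=.
have -> : \sum_(R <= t < s.+1) g (s + p - (t + p)) (t + p) = \sum_(R <= t < s.+1) g (s - t) t.
  by apply: eq_big_nat => t /andP[ht _]; rewrite gper // (_ : s + p - (t + p) = s - t) //; lia.
have -> : \sum_(0 <= t < R) g (s + p - (t + p)) (t + p) = \sum_(0 <= t < R) g (s - t) (t + p).
  by apply: eq_big_nat => t _; rewrite (_ : s + p - (t + p) = s - t) //; lia.
lia.
Qed.

Section FiniteDifferences.
Local Open Scope ring_scope.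

Definition fdiff (p : nat) (f : nat -> int) (s : nat) : int := f (s + p)%N - f s.

Variable p : nat.

Lemma iter_fdiffS k f s :
  iter k.+1 (fdiff p) f s = iter k (fdiff p) f (s + p)%N - iter k (fdiff p) f s.
Proof. by []. Qed.

Lemma iter_fdiff_ext k M (f h : nat -> int) :
  (forall s, (M <= s)%N -> f s = h s) ->
  forall s, (M <= s)%N -> iter k (fdiff p) f s = iter k (fdiff p) h s.
Proof.
move=> efh; elim: k => [|k IH] s hs; first exact: efh.
by rewrite !iter_fdiffS !IH //; lia.
Qed.

Lemma iter_fdiffD k (f h : nat -> int) s :
  iter k (fdiff p) (fun s => f s + h s) s = iter k (fdiff p) f s + iter k (fdiff p) h s.
Proof. by elim: k s => [|k IH] s //; rewrite !iter_fdiffS !IH; ring. Qed.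

Lemma iter_fdiffB k (f h : nat -> int) s :
  iter k (fdiff p) (fun s => f s - h s) s = iter k (fdiff p) f s - iter k (fdiff p) h s.
Proof. by elim: k s => [|k IH] s //; rewrite !iter_fdiffS !IH; ring. Qed.

Lemma iter_fdiff_sum (I : Type) (r : seq I) k (F : I -> nat -> int) s :
  iter k (fdiff p) (fun s => \sum_(i <- r) F i s) s = \sum_(i <- r) iter k (fdiff p) (F i) s.
Proof. by elim: k s => [|k IH] s //; rewrite !iter_fdiffS !IH sumrB. Qed.

Lemma iter_fdiff_comp k M (f : nat -> int) (phi : nat -> nat) :
  (forall s, (M <= s)%N -> phi (s + p)%N = (phi s + p)%N) ->
  forall s, (M <= s)%N -> iter k (fdiff p) (fun s => f (phi s)) s = iter k (fdiff p) f (phi s).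
Proof.
move=> hphi; elim: k => [|k IH] s hs //.
by rewrite !iter_fdiffS !IH ?hphi //; lia.
Qed.

Lemma iter3_fdiff (f : nat -> int) s :
  iter 3 (fdiff p) f s = f (s + 3 * p)%N - 3 * f (s + 2 * p)%N + 3 * f (s + p)%N - f s.
Proof.
have -> : (s + 3 * p = s + p + p + p)%N by lia.
have -> : (s + 2 * p = s + p + p)%N by lia.
by rewrite /= /fdiff; ring.
Qed.

Lemma fdiff_diag_sum R (g : nat -> nat -> nat) s :
  (forall u t, (R <= t)%N -> g u (t + p)%N = g u t) -> (R <= s.+1)%N ->
  fdiff p (fun s => Posz (diag_sum g s)) s =
    \sum_(0 <= t < p) Posz (g (s + p - t)%N t)
    + \sum_(0 <= t < R) (Posz (g (s - t)%N (t + p)%N) - Posz (g (s - t)%N t)).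
Proof.
have Posz_sum (r : seq nat) (F : nat -> nat) : Posz (\sum_(i <- r) F i) = \sum_(i <- r) Posz (F i).
  exact: (big_morph Posz PoszD (erefl (Posz 0))).
move=> gper hR; rewrite /fdiff; move: (@diag_sum_shift p R g s gper hR).
(* Generalized first: [PoszD] would otherwise unfold [diag_sum] by computation. *)
move: (diag_sum g (s + p)) (diag_sum g s) => X Y /(congr1 Posz).
rewrite !PoszD !Posz_sum sumrB; lra.
Qed.

(* Shifting s by p adds p new terms and disturbs only the R lowest columns
   ([diag_sum_shift]); every term of the difference is a translate of a column of g. *)
Lemma diag_sum_iter_fdiff k R N (g : nat -> nat -> nat) :
  (forall u t, (R <= t)%N -> g u (t + p)%N = g u t) ->
  (forall t s, (N <= s)%N -> iter k (fdiff p) (fun u => Posz (g u t)) s = 0) ->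
  forall s, (N + R <= s)%N -> iter k.+1 (fdiff p) (fun s => Posz (diag_sum g s)) s = 0.
Proof.
move=> gper gk s hs.
have vanish t (phi : nat -> nat) M :
    (forall s, (M <= s)%N -> phi (s + p)%N = (phi s + p)%N) -> (M <= s)%N -> (N <= phi s)%N ->
    iter k (fdiff p) (fun s => Posz (g (phi s) t)) s = 0.
  move=> hphi hM hN; transitivity (iter k (fdiff p) (fun u => Posz (g u t)) (phi s)).
    exact: iter_fdiff_comp hphi s hM.
  exact: gk.
rewrite iterSr (@iter_fdiff_ext k R _ (fun s =>
    \sum_(0 <= t < p) Posz (g (s + p - t)%N t)
    + \sum_(0 <= t < R) (Posz (g (s - t)%N (t + p)%N) - Posz (g (s - t)%N t)))); first last.
- lia.
- by move=> s' hs'; apply: fdiff_diag_sum => //; lia.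
rewrite iter_fdiffD !iter_fdiff_sum !big1_seq ?addr0 // => t; rewrite mem_index_iota => /andP[_ ht].
- by rewrite iter_fdiffB !(@vanish _ (fun s => s - t)%N t) ?subrr //; lia.
- by apply: (@vanish _ (fun s => s + p - t)%N 0); lia.
Qed.

Lemma pattern_count_iter3_fdiff m Q : periodic_pattern p m Q ->
  forall d, (3 * m <= d)%N -> iter 3 (fdiff p) (fun d => Posz (pattern_count Q d)) d = 0.
Proof.
case=> Qx Qy Qz.
have line2 y s : (m + m <= s)%N ->
    iter 2 (fdiff p) (fun s => Posz (diag_sum (fun x z => Q x y z) s)) s = 0.
  apply: (@diag_sum_iter_fdiff 1 m m) => [u t ht | t s' hs']; first by rewrite Qz.
  by rewrite iter_fdiffS /= Qx ?subrr.
move=> d hd; apply: (@diag_sum_iter_fdiff 2 m (m + m)) => [u t ht | t s' hs' | ]; last lia.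
  by rewrite /diag_sum; congr sumn; apply: eq_map => z; rewrite Qy.
exact: line2.
Qed.

Lemma eq_from_iter_fdiff k n0 (u v : nat -> int) :
  (forall n, (n0 <= n)%N -> iter k (fdiff 1) u n = iter k (fdiff 1) v n) ->
  (forall i, (i < k)%N -> u (n0 + i)%N = v (n0 + i)%N) ->
  forall n, (n0 <= n)%N -> u n = v n.
Proof.
elim: k u v => [|k IH] u v hk hinit; first exact: hk.
have hdiff : forall n, (n0 <= n)%N -> fdiff 1 u n = fdiff 1 v n.
  apply: IH => [n hn | i hi]; first by rewrite -!iterSr hk.
  by rewrite /fdiff -addnA !hinit //; lia.
move=> n /subnK <-; elim: (n - n0)%N => [|j IHj]; first by rewrite add0n -[n0]addn0 hinit.
rewrite addSn -addn1; have := hdiff (j + n0)%N (leq_addl _ _).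
rewrite /fdiff IHj; lra.
Qed.

End FiniteDifferences.

Definition corner_xz : seq (nat * nat) := [:: (1, 0); (1, 2); (1, 4); (3, 5); (4, 0); (4, 2)].

Definition corner_xy beta : seq (nat * nat) :=
  match beta with
  | 0 => [:: (0, 1); (0, 4); (2, 1); (2, 4); (4, 1); (5, 3)]
  | 1 => [:: (0, 1); (1, 3); (2, 1); (2, 5); (4, 2); (5, 0); (5, 4)]
  | 2 => [:: (0, 2); (1, 0); (1, 4); (2, 1); (4, 1); (4, 3); (5, 5)]
  | 3 => [:: (0, 0); (0, 4); (1, 1); (1, 5); (3, 2); (4, 0); (4, 4)]
  | 4 => [:: (0, 1); (0, 4); (2, 1); (3, 3); (4, 1); (4, 5)]
  | 5 => [:: (0, 3); (0, 5); (1, 0); (3, 1); (3, 3); (3, 4); (5, 1)]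
  | _ => [:: (0, 3); (1, 0); (2, 3); (3, 1); (3, 5); (5, 2)]
  end.

Definition corner_yz beta : seq (nat * nat) :=
  match beta with
  | 0 => [:: (0, 1); (0, 4); (2, 1); (2, 4); (4, 1); (5, 3)]
  | 1 => [:: (0, 1); (1, 3); (1, 5); (2, 3); (3, 0); (3, 4); (5, 1)]
  | 2 => [:: (0, 1); (0, 4); (2, 1); (3, 3); (4, 4); (5, 0)]
  | 3 => [:: (0, 1); (1, 3); (2, 5); (3, 0); (4, 2); (5, 4)]
  | 4 => [:: (0, 3); (1, 0); (2, 4); (3, 1); (3, 5); (4, 0); (5, 2)]
  | 5 => [:: (0, 1); (0, 4); (2, 1); (3, 3); (4, 5); (5, 0)]
  | _ => [:: (1, 0); (1, 2); (1, 4); (3, 1); (4, 3); (5, 5)]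
  end.

Definition side_y0 beta : seq nat :=
  match beta with
  | 0 => [:: 0; 2] | 1 => [:: 3; 5] | 2 => [:: 0] | 3 => [:: 2; 4]
  | 4 => [:: 0; 5] | 5 => [:: 1; 3] | _ => [:: 4; 6]
  end.

Definition side_y1 beta : seq nat :=
  match beta with
  | 0 => [:: 4] | 1 => [:: 0] | 2 => [:: 2; 4] | 3 => [:: 6]
  | 4 => [:: 2] | 5 => [:: 5] | _ => [:: 1]
  end.

Definition tri_pattern beta x y z : bool :=
  if (x < 6) && (z < 6) then (x, z) \in corner_xz
  else if (x < 6) && (y < 6) then (x, y) \in corner_xy beta
  else if (y < 6) && (z < 6) then (y, z) \in corner_yz beta
  else if x == 0 then (z %% 7) \in [:: 0; 2]
  else if z == 0 then (x %% 7) \in [:: 0; 4]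
  else if y == 0 then (x %% 7) \in side_y0 beta
  else if x == 1 then z %% 7 == 4
  else if z == 1 then x %% 7 == 2
  else if y == 1 then (x %% 7) \in side_y1 beta
  else (3 * x + z) %% 7 == 0.

Lemma tri_pattern_periodic beta : periodic_pattern 7 6 (tri_pattern beta).
Proof.
have far n : 6 <= n -> [/\ (n < 6) = false, (n == 0) = false & (n == 1) = false].
  by move=> hn; split; apply/negbTE; [rewrite -leqNgt | apply/eqP; lia | apply/eqP; lia].
split=> x y z hn; have [n6 n0 n1] := far _ hn;
  have [m6 m0 m1] := far (_ + 7) (leq_trans hn (leq_addr _ _));
  rewrite /tri_pattern n6 n0 n1 m6 m0 m1 ?modnDr ?andbF //.
  by rewrite (_ : 3 * (x + 7) + z = 3 * 7 + (3 * x + z)) ?modnMDl //; lia.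
by rewrite addnA modnDr.
Qed.

(* Selects the vertices listed by their coordinates (a, b). *)
Definition vertex_pattern (L : seq (nat * nat)) x (y : nat) z : bool := (x + z, x) \in L.

(* For q = 1, [tri_pattern] is not dominating when beta is 0, 1, 2 or 4. *)
Definition small_pattern beta : bary_pattern :=
  match beta with
  | 0 => vertex_pattern [:: (1, 0); (3, 2); (4, 0); (5, 5); (6, 3); (7, 1); (7, 6)]
  | 1 => vertex_pattern
           [:: (1, 0); (3, 2); (4, 0); (4, 2); (5, 5); (7, 0); (7, 2); (7, 4); (8, 7)]
  | 2 => vertex_pattern [:: (1, 0); (3, 3); (4, 1); (5, 3); (6, 1); (6, 6); (8, 0); (8, 3);
                           (8, 5); (9, 3); (9, 8)]
  | 4 => vertex_pattern [:: (1, 1); (3, 0); (4, 3); (6, 1); (6, 3); (6, 6); (8, 1); (8, 5);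
                           (9, 4); (9, 8); (10, 0); (10, 5); (10, 7); (11, 3); (11, 10)]
  | _ => tri_pattern beta
  end.

(* Twice the bound of the theorem, plus 2. *)
Definition bound2 q beta := 7 * q * q + (2 * beta + 9) * q + 2 * beta.

Definition pattern_excess beta q : int :=
  (2 * Posz (pattern_count (tri_pattern beta) (7 * q + beta)) + 2 - Posz (bound2 q beta))%R.

Lemma small_pattern_ok :
  all (fun beta => dominates (small_pattern beta) (7 + beta)
                   && (2 * pattern_count (small_pattern beta) (7 + beta) + 2 <= bound2 1 beta))
      (iota 0 7).
Proof. by vm_compute. Qed.

Lemma tri_pattern_base :
  all (fun beta => all (fun q => dominates (tri_pattern beta) (7 * q + beta)) (iota 2 4)
                   && [&& pattern_excess beta 2 <= 0, pattern_excess beta 3 <= 0,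
                          pattern_excess beta 4 == pattern_excess beta 3
                        & pattern_excess beta 5 == pattern_excess beta 3]%R)
      (iota 0 7).
Proof. by vm_compute. Qed.

Lemma tri_pattern_dominates beta q :
  beta <= 6 -> 2 <= q -> dominates (tri_pattern beta) (7 * q + beta).
Proof.
move=> hb; have hbeta : beta \in iota 0 7 by rewrite mem_iota.
have /andP[/allP base _] := allP tri_pattern_base beta hbeta.
elim: q => [//|q IH] hq.
case: (leqP q.+1 5) => h5; first by apply: base; rewrite mem_iota; lia.
rewrite (_ : 7 * q.+1 + beta = 7 * q + beta + 7); last lia.
by apply: (dominates_shift (tri_pattern_periodic beta)); [lia | apply: IH; lia].
Qed.

Lemma bound2_iter3_fdiff beta n : iter 3 (fdiff 1) (fun q => Posz (bound2 q beta)) n = 0%R.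
Proof. by rewrite iter3_fdiff /bound2 -!natz !natrD !natrM; ring. Qed.

Lemma pattern_excess_const beta n :
  beta <= 6 -> 3 <= n -> pattern_excess beta n = pattern_excess beta 3.
Proof.
move=> hb; apply: (@eq_from_iter_fdiff 3 3 _ (fun=> pattern_excess beta 3)) => [k hk | ].
  have := @pattern_count_iter3_fdiff _ _ _ (tri_pattern_periodic beta) (7 * k + beta) ltac:(lia).
  have := bound2_iter3_fdiff beta k.
  rewrite !iter3_fdiff /pattern_excess.
  rewrite (_ : 7 * (k + 3 * 1) + beta = 7 * k + beta + 3 * 7); last lia.
  rewrite (_ : 7 * (k + 2 * 1) + beta = 7 * k + beta + 2 * 7); last lia.
  rewrite (_ : 7 * (k + 1) + beta = 7 * k + beta + 7); last lia.
  (* Generalized first, so that lra does not unfold the counts. *)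
  move: (pattern_count (tri_pattern beta)) bound2 => C B; lra.
have hbeta : beta \in iota 0 7 by rewrite mem_iota.
have /andP[_ /and4P[_ _ /eqP e4 /eqP e5]] := allP tri_pattern_base beta hbeta.
case=> [_ | [_ | [_ | i hi]]];
  [exact: erefl | rewrite addn1; exact: e4 | rewrite addn2; exact: e5 | by exfalso].
Qed.

Lemma tri_pattern_count_bound beta q : beta <= 6 -> 2 <= q ->
  2 * pattern_count (tri_pattern beta) (7 * q + beta) + 2 <= bound2 q beta.
Proof.
move=> hb hq; have hbeta : beta \in iota 0 7 by rewrite mem_iota.
have /andP[_ /and4P[e2 e3 _ _]] := allP tri_pattern_base beta hbeta.
have : (pattern_excess beta q <= 0)%R.
  case: (leqP q 2) => hq2; first by rewrite (_ : q = 2) //; lia.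
  by rewrite pattern_excess_const.
rewrite /pattern_excess; lia.
Qed.

Lemma gammaT_bound2 beta q : beta <= 6 -> 1 <= q -> 2 * gammaT (7 * q + beta) + 2 <= bound2 q beta.
Proof.
move=> hb hq; case: (leqP 2 q) => hq2.
  apply: leq_trans (tri_pattern_count_bound hb hq2); rewrite leq_add2r leq_mul2l /=.
  exact/gammaT_le_pattern_count/tri_pattern_dominates.
have -> : q = 1 by lia.
have hbeta : beta \in iota 0 7 by rewrite mem_iota.
have /andP[hdom hcnt] := allP small_pattern_ok beta hbeta.
apply: leq_trans hcnt; rewrite muln1 leq_add2r leq_mul2l /=.
exact: gammaT_le_pattern_count.
Qed.

Local Open Scope ring_scope.

Theorem theorem2 (d q beta : nat) (hq : (1 <= q)%N) (hbeta : (beta <= 6)%N)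
  (hd : d = (7 * q + beta)%N) :
  (gammaT d)%:R <= (7%:R / 2%:R) * q%:R ^+ 2 + (beta%:R + 9%:R / 2%:R) * q%:R
                   + beta%:R - 1 :> rat.
Proof.
have := gammaT_bound2 hbeta hq; rewrite -hd /bound2 -(ler_nat rat).
rewrite !natrD !natrM; lra.
Qed.
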